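(* Let $\Gamma$ be a finite connected non-bipartite tetravalent $G$-half-arc-transitive graph (for some $G\le\mathrm{Aut}(\Gamma)$) of order greater than $12$, with $\mathrm{rad}_G(\Gamma)=3$ and $\mathrm{att}_G(\Gamma)=2$. Then there exist a $2$-fold covering projection $\wp\colon\Gamma\to\Gamma'$ and an arc-transitive group $H\le\mathrm{Aut}(\Gamma')$ which lifts along $\wp$ in such a way that $\wp$ is $H$-split and non-sectional (i.e. $\Gamma$ is a non-sectional $H$-split cover of $\Gamma'$).
   Context: All graphs are finite and simple. For a tetravalent graph $\Gamma$ and $G\le \mathrm{Aut}(\Gamma)$, $\Gamma$ is $G$-half-arc-transitive if $G$ acts transitively on vertices and edges but not on arcs; then the $G$-orbits on arcs give two paired orientations of the edges, each vertex being tail of two and head of two incident edges. A $G$-alternating cycle is a cycle in which every two consecutive edges have a common head or a common tail. All have length $2\,\mathrm{rad}_G(\Gamma)$, and any two sharing a vertex meet in $\mathrm{att}_G(\Gamma)$ vertices. A covering projection $\wp\colon\tilde\Gamma\to\Gamma'$ of connected graphs is a surjective graph homomorphism mapping the neighbourhood of each vertex bijectively onto the neighbourhood of its image; it is $2$-fold if every fibre $\wp^{-1}(x)$ has size $2$. The group $\mathrm{CT}(\wp)$ of covering transformations consists of the automorphisms $\gamma$ of $\tilde\Gamma$ with $\wp\gamma=\wp$. A group $H\le\mathrm{Aut}(\Gamma')$ lifts along $\wp$ if every $h\in H$ has a lift, i.e. some $\tilde h\in\mathrm{Aut}(\tilde\Gamma)$ with $\wp\tilde h=h\wp$; the lifted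 group $\tilde H$ is the group of all lifts of elements of $H$, and it is an extension of $\mathrm{CT}(\wp)$ by $H$. The projection is $H$-split if $\mathrm{CT}(\wp)$ has a complement $\bar H$ in $\tilde H$. Such a complement is sectional if there is a $\bar H$-invariant set $S\subseteq V(\tilde\Gamma)$ meeting each fibre of $\wp$ in exactly one vertex. An $H$-split covering projection is non-sectional if no complement of $\mathrm{CT}(\wp)$ in $\tilde H$ is sectional. *)

From mathcomp Require Import all_boot all_order all_fingroup.
From mathcomp Require Import gproduct.
Set Implicit Arguments. Unset Strict Implicit. Unset Printing Implicit Defensive.

Section Graphs.
Variable T : finType.
Implicit Types (e : rel T) (G : {set {perm T}}).

Definition simple_graph e := symmetric e /\ irreflexive e.

Definition GAut e : {set {perm T}} :=
  [set g : {perm T} | [forall x, forall y, e (g x) (g y) == e x y]].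

Definition tetravalent e := forall x, #|[set y | e x y]| = 4.

Definition connected_graph e := forall x y, connect e x y.

Definition bipartite e := exists c : T -> bool, forall x y, e x y -> c x != c y.

Definition vertex_transitive G := forall x y, exists2 g, g \in G & g x = y.

Definition edge_transitive G e :=
  forall x y u v, e x y -> e u v ->
    exists2 g, g \in G & (g x = u /\ g y = v) \/ (g x = v /\ g y = u).

Definition arc_transitive G e :=
  forall x y u v, e x y -> e u v -> exists2 g, g \in G & g x = u /\ g y = v.

Definition half_arc_transitive G e :=
  [/\ vertex_transitive G, edge_transitive G e & ~ arc_transitive G e].

(* the orientation given by the G-orbit of the arc (x0,y0): D x y means the
   edge {x,y} is oriented with tail x and head y *)
Definition orient G (x0 y0 : T) (x y : T) : bool :=
  [exists g in G, (g x0 == x) && (g y0 == y)].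

(* a G-alternating cycle w.r.t. the orientation orient G x0 y0, given as the
   cyclic sequence of its (distinct) vertices *)
Definition alt_cycle G e (x0 y0 : T) (s : seq T) :=
  let n := size s in
  let D := orient G x0 y0 in
  [/\ 3 <= n, uniq s, path.cycle e s &
      forall i, i < n ->
        let a := nth x0 s ((i + n.-1) %% n) in
        let b := nth x0 s i in
        let c := nth x0 s (i.+1 %% n) in
        (D a b && D c b) || (D b a && D b c)].

Definition cycle_edges (x0 : T) (s : seq T) : {set T * T} :=
  [set p : T * T | [exists i : 'I_(size s),
     (p == (nth x0 s i, nth x0 s (i.+1 %% size s))) ||
     (p == (nth x0 s (i.+1 %% size s), nth x0 s i))]].

(* rad_G(Gamma) = r : alternating cycles exist and all have length 2r
   (for the orientation given by either G-orbit on arcs) *)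
Definition rad_eq G e (r : nat) :=
  forall x0 y0, e x0 y0 ->
    (exists s, alt_cycle G e x0 y0 s) /\
    (forall s, alt_cycle G e x0 y0 s -> size s = 2 * r).

(* att_G(Gamma) = a : two distinct alternating cycles sharing a vertex exist,
   and any two distinct alternating cycles sharing a vertex meet in a vertices *)
Definition att_eq G e (a : nat) :=
  forall x0 y0, e x0 y0 ->
    (exists s1 s2, [/\ alt_cycle G e x0 y0 s1, alt_cycle G e x0 y0 s2,
                       cycle_edges x0 s1 != cycle_edges x0 s2 &
                       exists v, (v \in s1) && (v \in s2)]) /\
    (forall s1 s2, alt_cycle G e x0 y0 s1 -> alt_cycle G e x0 y0 s2 ->
       cycle_edges x0 s1 != cycle_edges x0 s2 ->
       (exists v, (v \in s1) && (v \in s2)) ->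
       #|[set v | (v \in s1) && (v \in s2)]| = a).

End Graphs.

Section Covers.
Variables (T T' : finType) (e : rel T) (e' : rel T') (p : T -> T').

Definition covering_projection :=
  [/\ connected_graph e, connected_graph e',
      forall y, exists x, p x = y,
      forall x y, e x y -> e' (p x) (p y) &
      forall x, {in [set y | e x y] &, injective p} /\
                p @: [set y | e x y] = [set y' | e' (p x) y']].

Definition k_fold (k : nat) := forall y : T', #|[set x | p x == y]| = k.

Definition CT : {set {perm T}} :=
  [set g in GAut e | [forall x, p (g x) == p x]].

Definition is_lift (h : {perm T'}) (g : {perm T}) := forall x, p (g x) = h (p x).

Definition lifts (H : {set {perm T'}}) :=
  forall h, h \in H -> exists2 g, g \in GAut e & is_lift h g.

Definition lifted_group (H : {set {perm T'}}) : {set {perm T}} :=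
  [set g in GAut e | [exists h in H, [forall x, p (g x) == h (p x)]]].

Definition H_split (H : {set {perm T'}}) :=
  lifts H /\ complements_to_in CT (lifted_group H) != set0.

Definition sectional (K : {set {perm T}}) :=
  exists S : {set T}, (forall g x, g \in K -> x \in S -> g x \in S) /\
    (forall y : T', #|[set x in S | p x == y]| = 1).

Definition nonsectional_split (H : {set {perm T'}}) :=
  H_split H /\
  forall K : {group {perm T}}, K \in complements_to_in CT (lifted_group H) ->
    ~ sectional K.

End Covers.

(* With radius 3 every alternating cycle is a hexagon whose tails and heads alternate,
   and every vertex v is a tail of exactly one of them and a head of exactly one.
   As the attachment number is 2, these two hexagons meet in one further vertex; an
   element of G fixing v and swapping its out-neighbours shows that this vertex is
   opposite to v in both hexagons.  Calling it tau v, tau is a fixed-point-free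
   involution commuting with G and reversing the orientation, and v, tau v are
   neither adjacent nor have a common neighbour.  Collapsing the pairs {v, tau v}
   is then a 2-fold cover with covering group {1, tau}; G projects onto an
   arc-transitive group H and is itself a complement of {1, tau} in the lift of H.
   A section invariant under any complement would split every pair {v, tau v}, and
   edge-transitivity would make it either a bipartition of the graph or a union of
   connected components, both impossible. *)

From mathcomp Require Import all_boot all_order all_fingroup.
From mathcomp Require Import gproduct.
From mathcomp Require Import zify.
Set Implicit Arguments. Unset Strict Implicit. Unset Printing Implicit Defensive.

Lemma GAutE (T : finType) (e : rel T) g x y : g \in GAut e -> e (g x) (g y) = e x y.
Proof. by rewrite inE => /forallP/(_ x)/forallP/(_ y)/eqP. Qed.

Lemma GAut_subE (T : finType) (e : rel T) (G : {set {perm T}}) g x y :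
  G \subset GAut e -> g \in G -> e (g x) (g y) = e x y.
Proof. by move=> GA /(subsetP GA); apply: GAutE. Qed.

Lemma group_set_GAut (T : finType) (e : rel T) : group_set (GAut e).
Proof.
apply/group_setP; split=> [|g h gA hA]; rewrite inE; apply/forallP=> x; apply/forallP=> y.
  by rewrite !perm1.
by rewrite !permM !GAutE.
Qed.

Canonical GAut_group (T : finType) (e : rel T) := Group (group_set_GAut e).

Lemma perm_stable_memE (T : finType) (s : {perm T}) (S : {set T}) :
  (forall x, x \in S -> s x \in S) -> forall x, (s x \in S) = (x \in S).
Proof.
move=> sS x; have /eqP sSE : s @: S == S.
  rewrite eqEcard card_imset ?leqnn ?andbT; last exact: perm_inj.
  by apply/subsetP=> _ /imsetP[y yS ->]; apply: sS.
by rewrite -{1}sSE mem_imset //; apply: perm_inj.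
Qed.

Lemma card2_cases (T : finType) (A : {set T}) a b c :
  #|A| = 2 -> a \in A -> b \in A -> a != b -> c \in A -> c = a \/ c = b.
Proof.
move=> cardA aA bA nab cA.
have /eqP defA : [set a; b] == A.
  rewrite eqEcard cardA cards2 nab andbT.
  by apply/subsetP=> x; rewrite !inE => /orP[]/eqP->.
by move: cA; rewrite -defA !inE => /orP[]/eqP; auto.
Qed.

Lemma uniq6_neq (T : eqType) (a b c d e f : T) : uniq [:: a; b; c; d; e; f] ->
  [/\ a != b, a != c, a != d, a != e & a != f] /\
  [/\ b != c, b != d, b != e & b != f] /\
  [/\ c != d, c != e & c != f] /\ [/\ d != e, d != f & e != f].
Proof.
rewrite /= !inE !negb_or.
by move=> /andP[/and5P[-> -> -> -> ->] /andP[/and4P[-> -> -> ->]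
  /andP[/and3P[-> -> ->] /andP[/andP[-> ->] /andP[-> _]]]]].
Qed.

Lemma mem6P (T : eqType) (u a b c d e f : T) : (u \in [:: a; b; c; d; e; f]) <->
  (u = a \/ u = b \/ u = c \/ u = d \/ u = e \/ u = f).
Proof.
rewrite !inE; split.
  by case/orP=> [/eqP|/orP[/eqP|/orP[/eqP|/orP[/eqP|/orP[/eqP|/eqP]]]]]; tauto.
by case=> [->|[->|[->|[->|[->|->]]]]]; rewrite eqxx ?orbT.
Qed.

Definition alt_hex (T : eqType) (R : rel T) (w0 w1 w2 w3 w4 w5 : T) : bool :=
  [&& R w0 w1, R w2 w1, R w2 w3, R w4 w3 &
   [&& R w4 w5, R w0 w5 & uniq [:: w0; w1; w2; w3; w4; w5]]].

Section AlternatingHexagons.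
Variables (T : finType) (R : rel T).

Lemma alt_hex_rot2 w0 w1 w2 w3 w4 w5 :
  alt_hex R w0 w1 w2 w3 w4 w5 -> alt_hex R w2 w3 w4 w5 w0 w1.
Proof.
case/and5P=> r01 r21 r23 r43 /and3P[r45 r05 uw].
rewrite /alt_hex r01 r21 r23 r43 r45 r05 /=.
by move: uw; rewrite -(rot_uniq 2).
Qed.

Lemma alt_hex_rev w0 w1 w2 w3 w4 w5 :
  alt_hex R w0 w1 w2 w3 w4 w5 -> alt_hex R w0 w5 w4 w3 w2 w1.
Proof.
case/and5P=> r01 r21 r23 r43 /and3P[r45 r05 uw].
rewrite /alt_hex r01 r21 r23 r43 r45 r05 /=.
by move: uw; rewrite -rev_uniq -(rot_uniq 5).
Qed.

Lemma alt_hex_rot3 w0 w1 w2 w3 w4 w5 :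
  alt_hex R w0 w1 w2 w3 w4 w5 -> alt_hex [rel x y | R y x] w3 w4 w5 w0 w1 w2.
Proof.
case/and5P=> r01 r21 r23 r43 /and3P[r45 r05 uw].
rewrite /alt_hex /= r01 r21 r23 r43 r45 r05 /=.
by move: uw; rewrite -(rot_uniq 3).
Qed.

Lemma alt_hex_map (g : T -> T) w0 w1 w2 w3 w4 w5 :
  {homo g : x y / R x y} -> injective g ->
  alt_hex R w0 w1 w2 w3 w4 w5 -> alt_hex R (g w0) (g w1) (g w2) (g w3) (g w4) (g w5).
Proof.
move=> gR ginj /and5P[r01 r21 r23 r43 /and3P[r45 r05 uw]].
by rewrite /alt_hex !gR //=; move: uw; rewrite -(map_inj_uniq ginj).
Qed.

End AlternatingHexagons.

Section AlternatingHexagonUniqueness.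
Variables (T : finType) (R : rel T).
Hypotheses (outdeg2 : forall x, #|[set y | R x y]| = 2)
           (indeg2 : forall x, #|[set y | R y x]| = 2).

Lemma out_nbr_cases x a b c : R x a -> R x b -> a != b -> R x c -> c = a \/ c = b.
Proof. by move=> xa xb nab xc; apply: (card2_cases (outdeg2 x)); rewrite ?inE. Qed.

Lemma in_nbr_cases x a b c : R a x -> R b x -> a != b -> R c x -> c = a \/ c = b.
Proof. by move=> ax bx nab cx; apply: (card2_cases (indeg2 x)); rewrite ?inE. Qed.

Lemma alt_hex_unique v a t h s b a' t' h' s' b' :
  alt_hex R v a t h s b -> alt_hex R v a' t' h' s' b' ->
  (a' = a /\ t' = t /\ h' = h /\ s' = s /\ b' = b) \/
  (a' = b /\ t' = s /\ h' = h /\ s' = t /\ b' = a).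
Proof.
case/and5P=> va ta th sh /and3P[sb vb
  /uniq6_neq[[_ nvt _ nvs _] [[_ nah _ nab] [_ [_ nhb _]]]]].
case/and5P=> va' ta' th' _ /and3P[sb' vb'
  /uniq6_neq[[_ nvt' _ nvs' _] [[_ nah' _ nab'] _]]].
have [Ea|Ea] := out_nbr_cases va vb nab va'; subst a'.
- have [Eb|Eb] := out_nbr_cases va vb nab vb'; subst b'; first by rewrite eqxx in nab'.
  have [Et|Et] := in_nbr_cases va ta nvt ta'; subst t'; first by rewrite eqxx in nvt'.
  have [Eh|Eh] := out_nbr_cases ta th nah th'; subst h'; first by rewrite eqxx in nah'.
  have [Es|Es] := in_nbr_cases vb sb nvs sb'; subst s'; first by rewrite eqxx in nvs'.
  by left.
- have [Eb|Eb] := out_nbr_cases va vb nab vb'; subst b'; last by rewrite eqxx in nab'.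
  have [Et|Et] := in_nbr_cases vb sb nvs ta'; subst t'; first by rewrite eqxx in nvt'.
  have [Eh|Eh] := out_nbr_cases sh sb nhb th'; subst h'; last by rewrite eqxx in nah'.
  have [Es|Es] := in_nbr_cases va ta nvt sb'; subst s'; first by rewrite eqxx in nvs'.
  by right.
Qed.

End AlternatingHexagonUniqueness.

Section AlternatingHexagonAntipode.
Variables (T : finType) (R : rel T).
Hypotheses (outdeg2 : forall x, #|[set y | R x y]| = 2)
           (indeg2 : forall x, #|[set y | R y x]| = 2).

Variable G : {group {perm T}}.
Hypotheses (G_homo : forall g, g \in G -> {homo g : x y / R x y})
           (G_arc_trans : forall x y u w, R x y -> R u w ->
                            exists2 g, g \in G & g x = u /\ g y = w).

(* An element of G fixing [v] and swapping its two out-neighbours reverses the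
   hexagon with tail [v] and preserves the one with head [v]; a second common
   vertex [w] of the two hexagons must then be fixed, i.e. be the antipode of [v]. *)
Lemma alt_hex_antipode v a t h s b q0 q1 q2 q4 q5 w :
  alt_hex R v a t h s b -> alt_hex R q0 q1 q2 v q4 q5 -> w != v ->
  w \in [:: v; a; t; h; s; b] -> w \in [:: q0; q1; q2; v; q4; q5] ->
  (forall u, u \in [:: v; a; t; h; s; b] -> u \in [:: q0; q1; q2; v; q4; q5] ->
     u = v \/ u = w) ->
  w = h.
Proof.
move=> HP HQ nwv wP wQ PQ.
have /and5P[va _ _ _ /and3P[_ vb /uniq6_neq[_ [[_ _ _ nab] [[_ nts _] _]]]]] := HP.
have [g gG [gv ga]] := G_arc_trans va vb.
have ginj : injective g := @perm_inj _ g.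
have gR' : {homo g : x y / [rel x y | R y x] x y} by move=> x y; apply: G_homo.
have := alt_hex_map (G_homo gG) ginj HP; rewrite gv ga => HgP.
have [[Eb _]|[_ [gt [gh [gs gb]]]]] := alt_hex_unique outdeg2 indeg2 HP HgP.
  by rewrite Eb eqxx in nab.
have HQ3 := alt_hex_rot3 HQ.
have := alt_hex_map gR' ginj HQ3; rewrite gv => HgQ.
have gQ u : u \in [:: q0; q1; q2; v; q4; q5] -> g u \in [:: q0; q1; q2; v; q4; q5].
  have [[E4 [E5 [E0 [E1 E2]]]]|[E4 [E5 [E0 [E1 E2]]]]] :=
     alt_hex_unique (R := [rel x y | R y x]) indeg2 outdeg2 HQ3 HgQ;
  by move=> /mem6P[->|[->|[->|[->|[->|->]]]]];
     rewrite ?E4 ?E5 ?E0 ?E1 ?E2 ?gv !inE eqxx ?orbT.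
have gP : g w \in [:: v; a; t; h; s; b].
  by move/mem6P: wP => [->|[->|[->|[->|[->|->]]]]];
     rewrite ?gv ?ga ?gt ?gh ?gs ?gb !inE eqxx ?orbT.
have [gwv|gww] := PQ _ gP (gQ _ wQ).
  by rewrite -gv in gwv; rewrite (ginj _ _ gwv) eqxx in nwv.
move: gww; move/mem6P: wP => [E|[E|[E|[E|[E|E]]]]]; subst w => //.
- by rewrite eqxx in nwv.
- by rewrite ga => E; rewrite E eqxx in nab.
- by rewrite gt => E; rewrite E eqxx in nts.
- by rewrite gs => E; rewrite E eqxx in nts.
- by rewrite gb => E; rewrite E eqxx in nab.
Qed.

End AlternatingHexagonAntipode.

Section AntipodeMap.
Variables (T : finType) (R : rel T) (f : T -> T).
Hypotheses (outdeg2 : forall x, #|[set y | R x y]| = 2)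
           (indeg2 : forall x, #|[set y | R y x]| = 2).
Hypotheses (alt_hex_at : forall v, exists a t h s b, alt_hex R v a t h s b)
           (f_antipode : forall w0 w1 w2 w3 w4 w5,
              alt_hex R w0 w1 w2 w3 w4 w5 -> f w0 = w3).

Lemma alt_hex_at_arc v w : R v w -> exists t h s b, alt_hex R v w t h s b.
Proof.
move=> vw; have [a [t [h [s [b H]]]]] := alt_hex_at v.
have /and5P[va _ _ _ /and3P[_ vb /uniq6_neq[_ [[_ _ _ nab] _]]]] := H.
have [->|->] := out_nbr_cases outdeg2 va vb nab vw; first by exists t, h, s, b.
by exists s, h, t, a; apply: alt_hex_rev.
Qed.

Lemma antipode_not_out v : ~ R v (f v).
Proof.
move=> vf; have [a [t [h [s [b H]]]]] := alt_hex_at v; rewrite (f_antipode H) in vf.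
case/and5P: H => va _ _ _ /and3P[_ vb /uniq6_neq[_ [[_ nah _ nab] [_ [_ nhb _]]]]].
by have [E|E] := out_nbr_cases outdeg2 va vb nab vf; rewrite E eqxx in nah nhb.
Qed.

Lemma antipode_no_common_head v w : R v w -> ~ R (f v) w.
Proof.
move=> vw fw; have [t [h [s [b H]]]] := alt_hex_at_arc vw; rewrite (f_antipode H) in fw.
case/and5P: H => vw' tw _ _ /and3P[_ _ /uniq6_neq[[_ nvt nvh _ _] [_ [[nth _ _] _]]]].
by have [E|E] := in_nbr_cases indeg2 vw' tw nvt fw; rewrite E eqxx in nvh nth.
Qed.

Lemma antipode_no_2path v w : R v w -> ~ R w (f v).
Proof.
move=> vw wf; have [t [h [s [b H]]]] := alt_hex_at_arc vw; rewrite (f_antipode H) in wf.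
case/and5P: H => _ _ th sh /and3P[_ _ /uniq6_neq[_ [[nwt _ nws _] [[_ nts _] _]]]].
by have [E|E] := in_nbr_cases indeg2 th sh nts wf; rewrite E eqxx in nwt nws.
Qed.

End AntipodeMap.

Section InvolutionQuotient.
Variables (T : finType) (e : rel T) (G : {group {perm T}}) (tau : T -> T).
Hypotheses (e_sym : symmetric e) (eirr : irreflexive e) (econ : connected_graph e)
           (GA : G \subset GAut e) (Get : edge_transitive G e)
           (Gnat : ~ arc_transitive G e) (nbip : ~ bipartite e).
Hypotheses (tauK : involutive tau) (tau_neq : forall x, tau x != x)
           (tau_nadj : forall x, ~~ e x (tau x))
           (tau_ncommon : forall x y, e x y -> ~~ e (tau x) y)
           (tau_act : forall g x, g \in G -> tau (g x) = g (tau x))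
           (tau_flip : forall x y, e x y ->
              exists2 g, g \in G & g x = tau y /\ g y = tau x).

Let GeE g x y : g \in G -> e (g x) (g y) = e x y.
Proof. exact: GAut_subE. Qed.

Lemma tau_edge x y : e (tau x) (tau y) = e x y.
Proof.
have tau_homo u v : e u v -> e (tau u) (tau v).
  by move=> uv; have [g gG [<- <-]] := tau_flip uv; rewrite GeE // e_sym.
by apply/idP/idP => [/tau_homo|/tau_homo //]; rewrite !tauK.
Qed.

Definition fibre x : {set T} := [set x; tau x].

Lemma fibre_in_image x : [exists y, fibre x == fibre y].
Proof. by apply/existsP; exists x. Qed.

Definition quot := {A : {set T} | [exists x, A == fibre x]}.

Definition qproj x : quot := Sub (fibre x) (fibre_in_image x).

Lemma qproj_eq x y : qproj x = qproj y <-> y = x \/ y = tau x.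
Proof.
split=> [/(congr1 val) /= fxy|[->|->] //].
  have : y \in fibre y by rewrite !inE eqxx.
  by rewrite -fxy !inE => /orP[]/eqP; auto.
by apply: val_inj; rewrite /= /fibre tauK setUC.
Qed.

Lemma qproj_tau x : qproj (tau x) = qproj x.
Proof. by apply/qproj_eq; right; rewrite tauK. Qed.

Definition qrep (A : quot) : T := xchoose (existsP (valP A)).

Lemma qrepK : cancel qrep qproj.
Proof. by move=> A; apply: val_inj; rewrite /= -(eqP (xchooseP (existsP (valP A)))). Qed.

Lemma qproj_surj A : exists x, qproj x = A.
Proof. by exists (qrep A); apply: qrepK. Qed.

Definition qrel : rel quot :=
  fun A B => [exists x, exists y, [&& qproj x == A, qproj y == B & e x y]].

Lemma qrelE x y : qrel (qproj x) (qproj y) = e x y || e x (tau y).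
Proof.
apply/existsP/orP => [[x1 /existsP[y1 /and3P[/eqP/qproj_eq x1E /eqP/qproj_eq y1E xy1]]]|].
  by case: x1E y1E xy1 => -> [] ->; rewrite ?tau_edge ?tauK; auto.
by case=> xy; [exists x; apply/existsP; exists y | exists x; apply/existsP; exists (tau y)];
  rewrite ?qproj_tau !eqxx.
Qed.

Lemma qrel_sym : symmetric qrel.
Proof.
move=> A B; have [x <-] := qproj_surj A; have [y <-] := qproj_surj B.
by rewrite !qrelE [e x y]e_sym -[e y (tau x)]tau_edge tauK [e (tau y) x]e_sym.
Qed.

Lemma qrel_irr : irreflexive qrel.
Proof.
by move=> A; have [x <-] := qproj_surj A; rewrite qrelE eirr (negbTE (tau_nadj x)).
Qed.

Lemma qproj_connect x y : connect e x y -> connect qrel (qproj x) (qproj y).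
Proof.
move/connectP=> [s xs ->]; elim: s x xs => [|z s IHs] x /=; first by rewrite connect0.
by case/andP=> xz zs; apply: connect_trans (connect1 _) (IHs z zs); rewrite qrelE xz.
Qed.

Lemma qproj_fibre y : [set x | qproj x == qproj y] = fibre y.
Proof.
apply/setP=> x; rewrite !inE eq_sym.
by apply/eqP/orP => [/qproj_eq[]->|[]/eqP->]; rewrite ?qproj_tau; auto.
Qed.

Lemma qproj_two_fold : k_fold qproj 2.
Proof.
by move=> A; have [y <-] := qproj_surj A; rewrite qproj_fibre cards2 eq_sym tau_neq.
Qed.

Lemma qproj_covering : covering_projection e qrel qproj.
Proof.
split=> // [A B||x y xy|x].
- by have [x <-] := qproj_surj A; have [y <-] := qproj_surj B; apply/qproj_connect/econ.
- exact: qproj_surj.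
- by rewrite qrelE xy.
split=> [y z|].
  rewrite !inE => xy xz /qproj_eq[->//|zE].
  have yx : e y x by rewrite e_sym.
  by move: (tau_ncommon yx); rewrite -zE e_sym xz.
apply/setP => B; rewrite inE; have [y <-] := qproj_surj B; rewrite qrelE.
apply/imsetP/orP => [[z]|[xy|xty]]; last by exists (tau y); rewrite ?inE ?qproj_tau.
  by rewrite inE => xz /qproj_eq[] zE; rewrite zE in xz; auto.
by exists y; rewrite ?inE.
Qed.

Lemma qproj_act g x y : g \in G -> qproj x = qproj y -> qproj (g x) = qproj (g y).
Proof. by move=> gG /qproj_eq[->|->]; rewrite // -tau_act // qproj_tau. Qed.

Definition qact (g : {perm T}) A := qproj (g (qrep A)).

Lemma qactE g x : g \in G -> qact g (qproj x) = qproj (g x).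
Proof. by move=> gG; apply: qproj_act; rewrite ?qrepK. Qed.

Lemma qact_inj g : g \in G -> injective (qact g).
Proof.
move=> gG A B; have [x <-] := qproj_surj A; have [y <-] := qproj_surj B.
by rewrite !qactE // => /(qproj_act (groupVr gG)); rewrite !permK.
Qed.

(* [qact g] is only meaningful for [g] in [G]; elsewhere it is replaced by the
   identity to obtain a permutation. *)
Definition qperm_fun (g : {perm T}) : quot -> quot :=
  if injectiveb (qact g) then qact g else id.

Lemma qperm_fun_inj (g : {perm T}) : injective (qperm_fun g).
Proof. by rewrite /qperm_fun; case: (injectiveP (qact g)) => // _; apply: inj_id. Qed.

Definition qperm (g : {perm T}) : {perm quot} := perm (@qperm_fun_inj g).

Lemma qpermE g x : g \in G -> qperm g (qproj x) = qproj (g x).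
Proof.
move=> gG; rewrite permE /qperm_fun.
by case: (injectiveP (qact g)) => [_|/(_ (qact_inj gG))//]; apply: qactE.
Qed.

Lemma qpermM : {in G &, {morph qperm : g h / (g * h)%g}}.
Proof.
move=> g h gG hG; apply/permP=> A; have [x <-] := qproj_surj A.
by rewrite permM !qpermE ?groupM // permM.
Qed.

Canonical qperm_morphism := Morphism qpermM.

Lemma qperm_im_aut : (qperm @* G)%g \subset GAut qrel.
Proof.
rewrite morphimEdom; apply/subsetP=> _ /imsetP[g gG ->] /=.
rewrite inE; apply/forallP=> A; apply/forallP=> B; apply/eqP.
have [x <-] := qproj_surj A; have [y <-] := qproj_surj B.
by rewrite (qpermE x gG) (qpermE y gG) !qrelE tau_act // !GeE.
Qed.

Lemma qproj_arc_lift x y u w : e x y -> e u w ->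
  exists2 g, g \in G & qproj (g x) = qproj u /\ qproj (g y) = qproj w.
Proof.
move=> xy uw; have [g gG [[<- <-]|[gx gy]]] := Get xy uw; first by exists g.
have wu : e w u by rewrite e_sym.
have [h hG [hw hu]] := tau_flip wu.
by exists (g * h)%g; rewrite ?groupM // !permM gx gy hw hu !qproj_tau.
Qed.

Lemma qperm_im_arc_transitive : arc_transitive (qperm @* G)%g qrel.
Proof.
move=> _ _ _ _ /existsP[x /existsP[y /and3P[/eqP<- /eqP<- xy]]]
  /existsP[u /existsP[w /and3P[/eqP<- /eqP<- uw]]].
have [g gG [gx gy]] := qproj_arc_lift xy uw.
by exists (qperm g); rewrite ?mem_morphim // (qpermE x gG) (qpermE y gG).
Qed.

Lemma qperm_im_lifts : lifts e qproj (qperm @* G)%g.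
Proof.
rewrite morphimEdom => _ /imsetP[g gG ->].
by exists g; [apply: (subsetP GA) | move=> x /=; rewrite (qpermE x gG)].
Qed.

Lemma CT_fixes_or_swaps c : c \in CT e qproj -> c = 1%g \/ (forall x, c x = tau x).
Proof.
rewrite inE => /andP[cA /forallP cp].
have cx x : c x = x \/ c x = tau x by apply/qproj_eq/esym/eqP.
(* If [c] fixes [x] and moves its neighbour [y] to [tau y], then [x] is a common
   neighbour of [y] and [tau y]. *)
have cl : closed e [pred x | c x == x].
  apply: (intro_closed (sym_connect_sym e_sym)) => x y xy /eqP cxx.
  rewrite inE; case: (cx y) => [->//|cyt]; have yx : e y x by rewrite e_sym.
  by move: (tau_ncommon yx); rewrite -cyt -cxx GAutE // yx.
have [x cxx|nofix] := pickP [pred x | c x == x].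
  left; apply/permP=> y; rewrite perm1; apply/eqP.
  by rewrite -[_ == _]/(y \in [pred z | c z == z]) -(closed_connect cl (econ x y)).
by right=> y; case: (cx y) => // cyy; move: (nofix y); rewrite /= cyy eqxx.
Qed.

Lemma G_neq_tau g : g \in G -> ~ (forall x, g x = tau x).
Proof.
move=> gG gtau; apply: Gnat => x y u w xy uw.
have [h hG [[hx hy]|[hx hy]]] := Get xy uw; first by exists h.
have wu : e w u by rewrite e_sym.
have [k kG [kw ku]] := tau_flip wu.
exists (h * k * g^-1)%g; first by rewrite !groupM ?groupV.
by rewrite !permM hx hy kw ku -!gtau !permK.
Qed.

Lemma CT1 : 1%g \in CT e qproj.
Proof. by rewrite in_set group1; apply/forallP=> x; rewrite perm1. Qed.

Lemma CT_TI_G : CT e qproj :&: G = 1%g.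
Proof.
apply/setP=> c; rewrite in_setI in_set1; apply/andP/eqP => [[cCT cG]|->].
  by case: (CT_fixes_or_swaps cCT) => // /(G_neq_tau cG).
by split; [apply: CT1 | apply: group1].
Qed.

Lemma lifted_groupE : lifted_group e qproj (qperm @* G)%g = (CT e qproj * G)%g.
Proof.
apply/eqP; rewrite eqEsubset; apply/andP; split; apply/subsetP.
  move=> l; rewrite inE => /andP[lA /existsP[h /andP[]]].
  rewrite morphimEdom => /imsetP[g gG ->] /forallP lg.
  have gA : g \in GAut e by apply: (subsetP GA).
  rewrite -(mulgKV g l); apply: mem_mulg (gG).
  rewrite in_set groupM ?groupV //=; apply/forallP=> x.
  have lx : qproj (l x) = qproj (g x) by rewrite -(qpermE x gG); apply/eqP/lg.
  by rewrite permM (qproj_act (groupVr gG) lx) permK.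
move=> _ /mulsgP[c g cCT gG ->]; move: cCT; rewrite inE => /andP[cA /forallP cp].
have gA : g \in GAut e by apply: (subsetP GA).
rewrite in_set groupM //=; apply/existsP; exists (qperm g).
rewrite mem_morphim //=; apply/forallP=> x; rewrite permM (qpermE x gG).
by apply/eqP/qproj_act => //; apply/eqP.
Qed.

Lemma G_complement :
  G \in complements_to_in (CT e qproj) (lifted_group e qproj (qperm @* G)%g).
Proof. by rewrite inE CT_TI_G lifted_groupE !eqxx. Qed.

Lemma section_tau_memE (S : {set T}) :
  (forall A, #|[set x in S | qproj x == A]| = 1) -> forall x, (tau x \in S) = (x \notin S).
Proof.
move=> Ssec x; have := Ssec (qproj x).
have -> : [set z in S | qproj z == qproj x] = S :&: fibre x.
  by apply/setP=> z; rewrite -qproj_fibre !inE.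
move=> /eqP/cards1P[z Fz].
have inF y : y \in fibre x -> (y \in S) = (y == z).
  by move=> yF; rewrite -in_set1 -Fz inE yF andbT.
have : z \in fibre x by move: (set11 z); rewrite -Fz inE => /andP[].
rewrite inF ?inE ?eqxx ?orbT // inF ?inE ?eqxx //.
by case/orP=> /eqP->; rewrite eqxx ?[x == tau x]eq_sym (negbTE (tau_neq x)).
Qed.

Lemma complement_section_flip (K : {group {perm T}}) (S : {set T}) :
  K \in complements_to_in (CT e qproj) (lifted_group e qproj (qperm @* G)%g) ->
  (forall k x, k \in K -> x \in S -> k x \in S) ->
  (forall A, #|[set x in S | qproj x == A]| = 1) ->
  forall g, g \in G -> exists b, forall x, (g x \in S) = (x \in S) (+) b.
Proof.
rewrite inE => /andP[_ /eqP CTK] KS Ssec g gG.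
have : g \in (CT e qproj * K)%g by rewrite CTK lifted_groupE -[g]mul1g mem_mulg ?CT1.
case/mulsgP=> c k cCT kK ->.
have kSE := perm_stable_memE (fun x => KS k x kK).
case: (CT_fixes_or_swaps cCT) => [-> | ctau].
  by exists false => x; rewrite mul1g kSE addbF.
by exists true => x; rewrite permM ctau kSE (section_tau_memE Ssec) addbT.
Qed.

Lemma edge_parity_invariant (S : {set T}) :
  (forall g, g \in G -> exists b, forall x, (g x \in S) = (x \in S) (+) b) ->
  forall x y u w, e x y -> e u w -> (x \in S) (+) (y \in S) = (u \in S) (+) (w \in S).
Proof.
move=> Gflip x y u w xy uw; have [g gG gxy] := Get xy uw; have [b gS] := Gflip g gG.
by case: gxy => -[<- <-]; rewrite !gS addbACA addbb addbF // addbC.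
Qed.

Lemma complement_not_sectional (K : {group {perm T}}) :
  K \in complements_to_in (CT e qproj) (lifted_group e qproj (qperm @* G)%g) ->
  ~ sectional qproj K.
Proof.
move=> Kcompl [S [KS Ssec]].
have parity := edge_parity_invariant (complement_section_flip Kcompl KS Ssec).
case: (pickP [pred xy : T * T | e xy.1 xy.2 && ~~ ((xy.1 \in S) (+) (xy.2 \in S))]).
  move=> [x y] /andP[/= xy even].
  have Sclosed : closed e (mem S).
    by move=> u w uw; apply/eqP; rewrite -negb_add (parity u w x y uw xy).
  have := closed_connect Sclosed (econ x (tau x)).
  by rewrite (section_tau_memE Ssec); case: (x \in S).
move=> odd; apply: nbip; exists (fun x => x \in S) => u w uw.
by move: (odd (u, w)); rewrite /= uw -negb_add negbK => /negbFE.
Qed.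

Lemma qproj_nonsectional_split : nonsectional_split e qproj (qperm @* G)%g.
Proof.
split; last exact: complement_not_sectional.
split; first exact: qperm_im_lifts.
by apply/set0Pn; exists G; apply: G_complement.
Qed.

Theorem involution_quotient_cover :
  exists (T' : finType) (e' : rel T') (p : T -> T') (H : {group {perm T'}}),
    [/\ simple_graph e', covering_projection e e' p, k_fold p 2,
        H \subset GAut e' /\ arc_transitive H e' & nonsectional_split e p H].
Proof.
exists quot, qrel, qproj, (qperm @* G)%G; split.
- by split; [apply: qrel_sym | apply: qrel_irr].
- exact: qproj_covering.
- exact: qproj_two_fold.
- by split; [apply: qperm_im_aut | apply: qperm_im_arc_transitive].
- exact: qproj_nonsectional_split.
Qed.

End InvolutionQuotient.

Section HalfArcTransitiveOrientation.
Variables (T : finType) (e : rel T) (G : {group {perm T}}) (x0 y0 : T).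
Hypotheses (GA : G \subset GAut e) (Get : edge_transitive G e)
           (Gnat : ~ arc_transitive G e) (e0 : e x0 y0).
Notation D := (orient G x0 y0).

Lemma orientP x y : reflect (exists2 g, g \in G & g x0 = x /\ g y0 = y) (D x y).
Proof.
apply: (iffP existsP) => [[g /andP[gG /andP[/eqP <- /eqP <-]]]|[g gG [<- <-]]].
  by exists g.
by exists g; rewrite gG !eqxx.
Qed.

Lemma orient_edge x y : D x y -> e x y.
Proof. by case/orientP=> g gG [<- <-]; rewrite (GAut_subE _ _ GA). Qed.

Lemma orient_act g x y : g \in G -> D x y -> D (g x) (g y).
Proof.
move=> gG /orientP[h hG [<- <-]]; apply/orientP; exists (h * g)%g; first by rewrite groupM.
by rewrite !permM.
Qed.

Lemma orient_trans x y u w : D x y -> D u w -> exists2 g, g \in G & g x = u /\ g y = w.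
Proof.
case/orientP=> g1 g1G [<- <-] /orientP[g2 g2G [<- <-]].
by exists (g1^-1 * g2)%g; rewrite ?groupM ?groupV // !permM !permK.
Qed.

Lemma edge_orient x y : e x y -> D x y || D y x.
Proof.
move=> exy; have [g gG [[gx gy]|[gx gy]]] := Get e0 exy; apply/orP; [left|right];
  by apply/orientP; exists g.
Qed.

Lemma orient_asym x y : D x y -> ~ D y x.
Proof.
move=> dxy dyx; apply: Gnat => a b u w eab euw.
have allD c d : e c d -> D c d.
  move=> ecd; case/orP: (edge_orient ecd) => // ddc.
  have [g gG [<- <-]] := orient_trans dxy ddc.
  by apply: orient_act.
exact: orient_trans (allD _ _ eab) (allD _ _ euw).
Qed.

End HalfArcTransitiveOrientation.

Section RadiusThreeAttachmentTwo.
Variables (T : finType) (e : rel T) (G : {group {perm T}}) (x0 y0 : T).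
Hypotheses (e_sym : symmetric e) (tet : tetravalent e) (GA : G \subset GAut e)
           (Gvt : vertex_transitive G) (Get : edge_transitive G e)
           (Gnat : ~ arc_transitive G e) (rad3 : rad_eq G e 3) (att2 : att_eq G e 2)
           (e0 : e x0 y0).
Notation D := (orient G x0 y0).
Notation D' := [rel x y | D y x].

Let D_asym := orient_asym Get Gnat e0.
Let D_edge := orient_edge GA e0.
Let edge_D := edge_orient Get e0.

Lemma alt_cycle_hex s : alt_cycle G e x0 y0 s -> size s = 6 ->
  exists w0 w1 w2 w3 w4 w5, alt_hex D w0 w1 w2 w3 w4 w5.
Proof.
case: s => [|w0 [|w1 [|w2 [|w3 [|w4 [|w5 [|]]]]]]] //= [_ uw _ alt] _.
have uw' : uniq [:: w1; w2; w3; w4; w5; w0] by move: uw; rewrite -(rot_uniq 1).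
have := alt 0 isT; have := alt 1 isT; have := alt 2 isT; have := alt 3 isT;
have := alt 4 isT; have := alt 5 isT => /=.
(* Each of the 2^6 head/tail patterns either contradicts the asymmetry of [D] or
   is an alternating hexagon starting at [w0] or at [w1]. *)
do 6 (case/orP=> /andP[? ?]).
all: try match goal with
  H1 : is_true (orient _ _ _ ?a ?b), H2 : is_true (orient _ _ _ ?b ?a) |- _ =>
    case: (D_asym H1 H2) end.
all: first [ by exists w0, w1, w2, w3, w4, w5; apply/and5P; split; try done; apply/and3P
           | by exists w1, w2, w3, w4, w5, w0; apply/and5P; split; try done; apply/and3P ].
Qed.

Lemma alt_hex_exists : exists w0 w1 w2 w3 w4 w5, alt_hex D w0 w1 w2 w3 w4 w5.
Proof.
by have [[s alt_s] size_s] := rad3 e0; apply: alt_cycle_hex alt_s (size_s s alt_s).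
Qed.

Lemma alt_hex_act g w0 w1 w2 w3 w4 w5 : g \in G -> alt_hex D w0 w1 w2 w3 w4 w5 ->
  alt_hex D (g w0) (g w1) (g w2) (g w3) (g w4) (g w5).
Proof. by move=> gG; apply: alt_hex_map (@perm_inj _ g) => x y; apply: orient_act. Qed.

Lemma alt_hex_at_tail v : exists a t h s b, alt_hex D v a t h s b.
Proof.
have [w0 [w1 [w2 [w3 [w4 [w5 H]]]]]] := alt_hex_exists; have [g gG gw] := Gvt w0 v.
have := alt_hex_act gG H; rewrite gw => gH.
by exists (g w1), (g w2), (g w3), (g w4), (g w5).
Qed.

Lemma alt_hex_at_head v : exists q0 q1 q2 q4 q5, alt_hex D q0 q1 q2 v q4 q5.
Proof.
have [w0 [w1 [w2 [w3 [w4 [w5 H]]]]]] := alt_hex_exists; have [g gG gw] := Gvt w3 v.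
have := alt_hex_act gG H; rewrite gw => gH.
by exists (g w0), (g w1), (g w2), (g w4), (g w5).
Qed.

Lemma alt_hex_at_head' v : exists a t h s b, alt_hex D' v a t h s b.
Proof.
have [q0 [q1 [q2 [q4 [q5 Q]]]]] := alt_hex_at_head v.
by exists q4, q5, q0, q1, q2; apply: alt_hex_rot3.
Qed.

Lemma orient_deg2 v : #|[set y | D v y]| = 2 /\ #|[set y | D y v]| = 2.
Proof.
have [a [t [h [s [b /and5P[va _ _ _ /and3P[_ vb /uniq6_neq[_ [[_ _ _ nab] _]]]]]]]]] :=
  alt_hex_at_tail v.
have [q0 [q1 [q2 [q4 [q5
  /and5P[_ _ q2v q4v /and3P[_ _ /uniq6_neq[_ [_ [[_ nq _] _]]]]]]]]]] := alt_hex_at_head v.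
have out2 : 2 <= #|[set y | D v y]|.
  have := cards2 a b; rewrite nab => <-; apply: subset_leq_card.
  by apply/subsetP => y; rewrite !inE => /orP[]/eqP->.
have in2 : 2 <= #|[set y | D y v]|.
  have := cards2 q2 q4; rewrite nq => <-; apply: subset_leq_card.
  by apply/subsetP => y; rewrite !inE => /orP[]/eqP->.
have nbrs : [set y | D v y] :|: [set y | D y v] = [set y | e v y].
  apply/setP => y; rewrite !inE; apply/idP/idP; last exact: edge_D.
  by case/orP=> [/D_edge|/D_edge]; rewrite // e_sym.
have disj : [set y | D v y] :&: [set y | D y v] = set0.
  by apply/setP => y; rewrite !inE; apply/negbTE/andP => -[/D_asym].
have := cardsUI [set y | D v y] [set y | D y v].
rewrite nbrs disj cards0 tet addn0; lia.
Qed.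

Let outdeg2 v : #|[set y | D v y]| = 2. Proof. exact: (orient_deg2 v).1. Qed.
Let indeg2 v : #|[set y | D y v]| = 2. Proof. exact: (orient_deg2 v).2. Qed.

(* The default [v] is never used: every vertex is the tail of an alternating hexagon,
   unique up to reflection by [alt_hex_unique]. *)
Definition tau v :=
  odflt v [pick h | [exists a, exists t, exists s, exists b, alt_hex D v a t h s b]].

Lemma tau_tail v a t h s b : alt_hex D v a t h s b -> tau v = h.
Proof.
move=> H; rewrite /tau; case: pickP => /=.
  move=> h' /existsP[a' /existsP[t' /existsP[s' /existsP[b' H']]]].
  by have [[_ [_ [-> _]]]|[_ [_ [-> _]]]] := alt_hex_unique outdeg2 indeg2 H H'.
move=> none; case/negP: (negbT (none h)).
by apply/existsP; exists a; apply/existsP; exists t; apply/existsP; exists s;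
  apply/existsP; exists b.
Qed.

Lemma alt_hex_cycle w0 w1 w2 w3 w4 w5 : alt_hex D w0 w1 w2 w3 w4 w5 ->
  alt_cycle G e x0 y0 [:: w0; w1; w2; w3; w4; w5].
Proof.
case/and5P=> r01 r21 r23 r43 /and3P[r45 r05 uw]; split => //.
  have e_rev x y : D y x -> e x y by move/D_edge; rewrite e_sym.
  by rewrite /= D_edge // e_rev // D_edge // e_rev // D_edge // e_rev.
by move=> [|[|[|[|[|[|i]]]]]] //= _; rewrite ?r01 ?r21 ?r23 ?r43 ?r45 ?r05 ?orbT.
Qed.

Lemma alt_hex_edges_neq v a t h s b q0 q1 q2 q4 q5 :
  alt_hex D v a t h s b -> alt_hex D q0 q1 q2 v q4 q5 ->
  cycle_edges x0 [:: v; a; t; h; s; b] != cycle_edges x0 [:: q0; q1; q2; v; q4; q5].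
Proof.
move=> /and5P[va _ _ _ _] /and5P[q01 q21 q23 q43 /and3P[q45 q05
  /uniq6_neq[[_ _ n03 _ _] [[_ n13 _ _] [[n23 _ _] [n34 n35 _]]]]]].
apply/negP => /eqP E.
have : (v, a) \in cycle_edges x0 [:: v; a; t; h; s; b].
  by rewrite inE; apply/existsP; exists (@Ordinal 6 0 isT); rewrite /= eqxx.
(* In the second hexagon [v] is a head, so no arc of it leaves [v]. *)
rewrite E inE => /existsP[[[|[|[|[|[|[|i]]]]]] //= _]];
  rewrite !xpair_eqE => /orP[]/andP[/eqP E1 /eqP E2]; subst;
  by [move: n03 n13 n23 n34 n35; rewrite ?eqxx | case: (D_asym va)].
Qed.

(* By [att_eq G e 2] the hexagons with tail [v] and with head [v] meet in exactly
   one further vertex [w]; applying [alt_hex_antipode] to [D] and to its converse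
   shows that [w] is opposite to [v] in both. *)
Lemma tau_head q0 q1 q2 v q4 q5 : alt_hex D q0 q1 q2 v q4 q5 -> tau v = q0.
Proof.
move=> HQ; have [a [t [h [s [b HP]]]]] := alt_hex_at_tail v.
rewrite (tau_tail HP).
have vPQ : (v \in [:: v; a; t; h; s; b]) && (v \in [:: q0; q1; q2; v; q4; q5]).
  by rewrite !inE !eqxx !orbT.
have := (att2 e0).2 _ _ (alt_hex_cycle HP) (alt_hex_cycle HQ) (alt_hex_edges_neq HP HQ)
  (ex_intro _ v vPQ).
set S := [set _ | _] => cardS.
have [w [nwv defS]] : exists w, w != v /\ S = [set v; w].
  have /cards2P[x [y [nxy defS]]] : #|S| == 2 by rewrite cardS.
  have : v \in S by rewrite inE.
  rewrite defS !inE => /orP[]/eqP Ev; subst.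
    by exists y; rewrite eq_sym.
  by exists x; rewrite setUC.
have : w \in S by rewrite defS !inE eqxx orbT.
rewrite inE => /andP[wP wQ].
have PQ u : u \in [:: v; a; t; h; s; b] -> u \in [:: q0; q1; q2; v; q4; q5] ->
    u = v \/ u = w.
  move=> uP uQ; have : u \in S by rewrite inE uP uQ.
  by rewrite defS !inE => /orP[]/eqP; auto.
have D_act g : g \in G -> {homo g : x y / D x y} by move=> gG x y; apply: orient_act.
have D'_act g : g \in G -> {homo g : x y / D' x y} by move=> gG x y; apply: orient_act.
have D'_trans x y u w' : D' x y -> D' u w' -> exists2 g, g \in G & g x = u /\ g y = w'.
  by move=> yx wu; have [g gG [? ?]] := orient_trans yx wu; exists g.
rewrite -(alt_hex_antipode outdeg2 indeg2 D_act (@orient_trans T G x0 y0)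
  HP HQ nwv wP wQ PQ).
apply: (alt_hex_antipode (R := D') indeg2 outdeg2 D'_act D'_trans
  (alt_hex_rot3 HQ) (alt_hex_rot3 HP) nwv) => [||u uQ uP]; last apply: PQ;
  by rewrite -(mem_rot 3).
Qed.

Lemma tau_head' w0 w1 w2 w3 w4 w5 : alt_hex D' w0 w1 w2 w3 w4 w5 -> tau w0 = w3.
Proof. by move/alt_hex_rot3; apply: tau_head. Qed.

Lemma tauK : involutive tau.
Proof.
move=> v; have [q0 [q1 [q2 [q4 [q5 Q]]]]] := alt_hex_at_head v.
by rewrite (tau_head Q) (tau_tail Q).
Qed.

Lemma tau_neq v : tau v != v.
Proof.
have [a [t [h [s [b H]]]]] := alt_hex_at_tail v; rewrite (tau_tail H).
by case/and5P: H => _ _ _ _ /and3P[_ _ /uniq6_neq[[_ _ n03 _ _] _]]; rewrite eq_sym.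
Qed.

Lemma tau_act g v : g \in G -> tau (g v) = g (tau v).
Proof.
move=> gG; have [a [t [h [s [b H]]]]] := alt_hex_at_tail v.
by rewrite (tau_tail H) (tau_tail (alt_hex_act gG H)).
Qed.

Lemma tau_reverses x y : D x y -> D (tau y) (tau x).
Proof.
move=> xy; have [t [h [s [b H]]]] := alt_hex_at_arc outdeg2 alt_hex_at_tail xy.
rewrite (tau_tail H) (tau_head (alt_hex_rot2 (alt_hex_rot2 H))).
by case/and5P: H.
Qed.

Lemma tau_nadj v : ~~ e v (tau v).
Proof.
apply/negP => /edge_D/orP[].
  exact: (antipode_not_out outdeg2 alt_hex_at_tail tau_tail).
exact: (antipode_not_out (R := D') indeg2 alt_hex_at_head' tau_head').
Qed.

Lemma tau_ncommon v w : e v w -> ~~ e (tau v) w.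
Proof.
move=> /edge_D/orP[] vw; apply/negP => /edge_D/orP[] tw.
- exact: (antipode_no_common_head outdeg2 indeg2 alt_hex_at_tail tau_tail vw).
- exact: (antipode_no_2path outdeg2 indeg2 alt_hex_at_tail tau_tail vw).
- exact: (antipode_no_2path (R := D') indeg2 outdeg2 alt_hex_at_head' tau_head' vw).
- exact: (antipode_no_common_head (R := D') indeg2 outdeg2 alt_hex_at_head' tau_head' vw).
Qed.

Lemma tau_flip x y : e x y -> exists2 g, g \in G & g x = tau y /\ g y = tau x.
Proof.
case/edge_D/orP=> [xy|yx].
  by have [g gG [gx gy]] := orient_trans xy (tau_reverses xy); exists g.
by have [g gG [gy gx]] := orient_trans yx (tau_reverses yx); exists g.
Qed.

Theorem antipodal_quotient_cover :
  irreflexive e -> connected_graph e -> ~ bipartite e ->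
  exists (T' : finType) (e' : rel T') (p : T -> T') (H : {group {perm T'}}),
    [/\ simple_graph e', covering_projection e e' p, k_fold p 2,
        H \subset GAut e' /\ arc_transitive H e' & nonsectional_split e p H].
Proof.
move=> e_irr e_conn nbip.
exact: (involution_quotient_cover e_sym e_irr e_conn GA Get Gnat nbip tauK tau_neq
  tau_nadj tau_ncommon tau_act tau_flip).
Qed.

End RadiusThreeAttachmentTwo.

Theorem theorem4p1 (T : finType) (e : rel T) (G : {group {perm T}}) :
  simple_graph e -> connected_graph e -> ~ bipartite e -> tetravalent e ->
  G \subset GAut e -> half_arc_transitive G e ->
  12 < #|T| -> rad_eq G e 3 -> att_eq G e 2 ->
  exists (T' : finType) (e' : rel T') (p : T -> T') (H : {group {perm T'}}),
    [/\ simple_graph e', covering_projection e e' p, k_fold p 2,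
        H \subset GAut e' /\ arc_transitive H e' &
        nonsectional_split e p H].
Proof.
move=> [e_sym e_irr] e_conn nbip tet GA [Gvt Get Gnat] order rad3 att2.
(* The bound on the order is only needed to have a vertex to start from. *)
have /card_gt0P[x0 _] : 0 < #|T| by apply: leq_ltn_trans order.
have /card_gt0P[y0] : 0 < #|[set y | e x0 y]| by rewrite tet.
rewrite inE => e0.
exact: (antipodal_quotient_cover e_sym tet GA Gvt Get Gnat rad3 att2 e0 e_irr e_conn nbip).
Qed.
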